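(* Let $M$ be a closed manifold immersed in $(V,\omega)=(\mathbb{R}^{2d},\sum_i dx_i\wedge dy_i)$, let $\mathbf{Z}=(z_1,\dots,z_n,z_{n+1})$ be an outer symplectic billiard orbit, and let $A(\mathbf{Z})=\tfrac12\sum_{i=1}^n\omega(z_i,z_{i+1})$ and $\mathbf{Q}=(Q_1,\dots,Q_n)$, $Q_i=\tfrac12(z_i+z_{i+1})$. If $\mathbf{Z}$ is an $n$-periodic orbit ($z_{n+1}=z_1$) with $n$ odd, then $A(\mathbf{Z})=F(\mathbf{Q})$, where $F(Q_1,\dots,Q_n)=2\sum_{1\le i<j\le n}(-1)^{i+j-1}\omega(Q_i,Q_j)$. If $\mathbf{Z}$ is an $n$-link orbit connecting $L_1=\mathbb{R}^d_x\times\{0\}$ and $L_2=\{0\}\times\mathbb{R}^d_y$, then $A(\mathbf{Z})=G(\mathbf{Q})$, where, writing $Q_i=(q_i,q_i')$, $G(\mathbf{Q})=2\sum_{i=1}^nq_i\cdot q_i'+4\sum_{1\le i<j\le n}(-1)^{j-i}q_j\cdot q_i'$.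
   Context: $\omega((x,y),(x',y'))=x\cdot y'-y\cdot x'$. Two points $z,z'$ are in outer symplectic billiard correspondence with respect to $M$ if $Q=\tfrac12(z+z')$ is a point of $M$ and $\omega(z'-z,\zeta)=0$ for all $\zeta\in T_QM$. An $n$-periodic orbit is $(z_1,\dots,z_n)$ with $z_i,z_{i+1}$ in correspondence for all $i$ (indices mod $n$). An $n$-link orbit connecting $L_1$ and $L_2$ is $(z_1,\dots,z_{n+1})$ with $z_1\in L_1$, $z_{n+1}\in L_2$ and $z_i,z_{i+1}$ in correspondence for $i=1,\dots,n$. *)

From HB Require Import structures.
From mathcomp Require Import all_boot all_order all_algebra.
From mathcomp Require Import reals.
Set Implicit Arguments. Unset Strict Implicit. Unset Printing Implicit Defensive.
Import Order.TTheory GRing.Theory Num.Theory.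
Local Open Scope ring_scope.

Definition pt (R : realType) (d : nat) := ('rV[R]_d * 'rV[R]_d)%type.

Section Defs.
Variables (R : realType) (d : nat).

Definition dot (u v : 'rV[R]_d) : R := \sum_(k < d) u 0 k * v 0 k.

Definition omega (z z' : pt R d) : R := dot z.1 z'.2 - dot z.2 z'.1.

Definition padd (z z' : pt R d) : pt R d := (z.1 + z'.1, z.2 + z'.2).
Definition psub (z z' : pt R d) : pt R d := (z.1 - z'.1, z.2 - z'.2).
Definition pscale (a : R) (z : pt R d) : pt R d := (a *: z.1, a *: z.2).

Definition midpt (z z' : pt R d) : pt R d := pscale (1 / 2) (padd z z').

(* M : the (immersed) submanifold, as a set of points of V;
   TM Q : the tangent space T_Q M, as a set of vectors of V. *)
Definition corresp (M : pt R d -> Prop) (TM : pt R d -> pt R d -> Prop)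
  (z z' : pt R d) : Prop :=
  M (midpt z z') /\ forall zeta, TM (midpt z z') zeta -> omega (psub z' z) zeta = 0.

(* Orbit data indexed by nat; the orbit is (z 1, ..., z (n+1)). *)
Definition periodic_orbit M TM (n : nat) (z : nat -> pt R d) : Prop :=
  z n.+1 = z 1%N /\ forall i, (1 <= i <= n)%N -> corresp M TM (z i) (z i.+1).

Definition L1 (z : pt R d) : Prop := z.2 = 0.
Definition L2 (z : pt R d) : Prop := z.1 = 0.

Definition link_orbit M TM (n : nat) (z : nat -> pt R d) : Prop :=
  L1 (z 1%N) /\ L2 (z n.+1) /\
  forall i, (1 <= i <= n)%N -> corresp M TM (z i) (z i.+1).

Definition action (n : nat) (z : nat -> pt R d) : R :=
  (1 / 2) * \sum_(1 <= i < n.+1) omega (z i) (z i.+1).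

Definition Qs (z : nat -> pt R d) (i : nat) : pt R d := midpt (z i) (z i.+1).

Definition Ffun (n : nat) (Q : nat -> pt R d) : R :=
  2 * \sum_(1 <= i < n.+1) \sum_(i.+1 <= j < n.+1)
        (-1) ^+ (i + j - 1) * omega (Q i) (Q j).

Definition Gfun (n : nat) (Q : nat -> pt R d) : R :=
  2 * \sum_(1 <= i < n.+1) dot (Q i).1 (Q i).2
  + 4 * \sum_(1 <= i < n.+1) \sum_(i.+1 <= j < n.+1)
        (-1) ^+ (j - i) * dot (Q j).1 (Q i).2.

End Defs.

From HB Require Import structures.
From mathcomp Require Import all_boot all_algebra sesquilinear.
From mathcomp Require Import reals ring.
Set Implicit Arguments. Unset Strict Implicit. Unset Printing Implicit Defensive.
Import GRing.Theory Num.Theory.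
Local Open Scope ring_scope.

(* Writing z_{i+1} = 2 Q_i - z_i, every
   vertex is recovered from z_1 and the midpoints,
     z_{n+1} = (-1)^n (z_1 + 2 T_n),   T_n = sum_{i <= n} (-1)^i Q_i,
   and an induction on n shows A - F = omega(T_n, z_1).  For a closed orbit of
   odd length this formula gives T_n = -z_1, so A = F.  Splitting omega into
   beta(u, v) - beta(v, u) with beta((x,y),(x',y')) = x . y', the same induction
   gives A - G = (beta(z_1, z_1) - beta(z_{n+1}, z_{n+1})) / 2 + 2 beta(T_n, z_1),
   and every term vanishes when z_1 lies in L_1 and z_{n+1} in L_2. *)

Lemma big_triangle_recr (M : nmodType) (F : nat -> nat -> M) n :
  \sum_(1 <= i < n.+2) \sum_(i.+1 <= j < n.+2) F i j =
  \sum_(1 <= i < n.+1) \sum_(i.+1 <= j < n.+1) F i j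
  + \sum_(1 <= i < n.+1) F i n.+1.
Proof.
rewrite big_nat_recr //= [X in _ + X]big_geq // addr0 -big_split /=.
by apply: eq_big_nat => i /andP[_ ltin]; rewrite big_nat_recr.
Qed.

Lemma signr_subn (R : pzRingType) m n : (n <= m)%N ->
  (-1) ^+ (m - n) = (-1) ^+ m * (-1) ^+ n :> R.
Proof. by move=> lenm; rewrite -signr_odd oddB // signr_addb !signr_odd. Qed.

Section MidpointIdentities.
Variables (R : fieldType) (V : lmodType R) (b : {biscalar V}).
Hypothesis two_neq0 : 2 != 0 :> R.

(* Over a field with 2 != 0 every alternating form w is the skew part of the
   bilinear form w / 2, so nothing is lost by working with skew parts. *)
Definition skew_part u v := b u v - b v u.

Lemma skew_part_suml I r (P : pred I) (F : I -> V) w :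
  skew_part (\sum_(i <- r | P i) F i) w = \sum_(i <- r | P i) skew_part (F i) w.
Proof. by rewrite /skew_part linear_sumlz linear_sumr -sumrB. Qed.

Lemma skew_partZl a u w : skew_part (a *: u) w = a * skew_part u w.
Proof. by rewrite /skew_part linearZl_LR linearZr_LR mulrBr. Qed.

Variable z : nat -> V.

Definition mid i := (1 / 2 : R) *: (z i + z i.+1).

Definition altsum n := \sum_(1 <= i < n.+1) (-1) ^+ i *: mid i.

Definition Asum n := 1 / 2 * \sum_(1 <= i < n.+1) skew_part (z i) (z i.+1).

Definition Fsum n := 2 * \sum_(1 <= i < n.+1) \sum_(i.+1 <= j < n.+1)
  (-1) ^+ (i + j - 1) * skew_part (mid i) (mid j).

Definition Gsum n := 2 * \sum_(1 <= i < n.+1) b (mid i) (mid i)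
  + 4 * \sum_(1 <= i < n.+1) \sum_(i.+1 <= j < n.+1)
          (-1) ^+ (j - i) * b (mid j) (mid i).

Lemma vertexS i : z i.+1 = 2 *: mid i - z i.
Proof. by rewrite scalerA mulrC divfK // scale1r addrC addKr. Qed.

Lemma altsumS n : altsum n.+1 = altsum n + (-1) ^+ n.+1 *: mid n.+1.
Proof. by rewrite /altsum big_nat_recr. Qed.

Lemma vertex_altsum n : z n.+1 = (-1) ^+ n *: (z 1 + 2 *: altsum n).
Proof.
elim: n => [|n IHn]; first by rewrite /altsum big_geq // scaler0 addr0 scale1r.
rewrite vertexS IHn altsumS exprS mulN1r.
have sign2 : (-1) ^+ n * (-1) ^+ n = 1 :> R by rewrite -expr2 sqrr_sign.
move: (mid n.+1) (altsum n) sign2 => Q T; move: ((-1) ^+ n) => s sign2.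
rewrite !scalerDr !scaleNr !scalerN !scalerA mulrAC sign2 mul1r opprK.
by rewrite opprD addrC -addrA.
Qed.

Lemma AsumS n : Asum n.+1 = Asum n + 1 / 2 * skew_part (z n.+1) (z n.+2).
Proof. by rewrite /Asum big_nat_recr //= mulrDr. Qed.

Lemma FsumS n :
  Fsum n.+1 = Fsum n + 2 * (-1) ^+ n * skew_part (altsum n) (mid n.+1).
Proof.
rewrite /Fsum big_triangle_recr mulrDr -mulrA skew_part_suml.
congr (_ + 2 * _); rewrite mulr_sumr; apply: eq_bigr => i _.
rewrite (skew_partZl ((-1) ^+ i)) addnS subSS subn0 exprD.
by rewrite mulrA (mulrC ((-1) ^+ n)).
Qed.

Lemma GsumS n : Gsum n.+1 =
  Gsum n + 2 * b (mid n.+1) (mid n.+1) - 4 * (-1) ^+ n * b (mid n.+1) (altsum n).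
Proof.
rewrite /Gsum big_triangle_recr big_nat_recr //=.
have -> : \sum_(1 <= i < n.+1) (-1) ^+ (n.+1 - i) * b (mid n.+1) (mid i)
          = - ((-1) ^+ n * b (mid n.+1) (altsum n)).
  rewrite linear_sumr mulr_sumr -sumrN; apply: eq_big_nat => i /andP[_ ltin].
  by rewrite (linearZr_LR b _ ((-1) ^+ i)) signr_subn 1?ltnW // exprS; ring.
ring.
Qed.

Lemma Asum_sub_Fsum n : Asum n - Fsum n = skew_part (altsum n) (z 1).
Proof.
elim: n => [|n IHn].
  rewrite /Asum /Fsum /altsum !big_geq // /skew_part linear0l linear0r.
  by rewrite !mulr0 !subrr.
rewrite AsumS FsumS altsumS (vertexS n.+1) (vertex_altsum n).
have -> : Asum n = Fsum n + skew_part (altsum n) (z 1) by rewrite -IHn subrKC.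
rewrite exprS; move: (mid n.+1) (altsum n) (z 1) => Q T x.
rewrite /skew_part !(linearDl, linearDr, linearBl, linearBr, linearNl, linearNr,
  linearZl_LR, linearZr_LR).
by field.
Qed.

Lemma Asum_sub_Gsum n : Asum n - Gsum n =
  1 / 2 * (b (z 1) (z 1) - b (z n.+1) (z n.+1)) + 2 * b (altsum n) (z 1).
Proof.
elim: n => [|n IHn].
  by rewrite /Asum /Gsum /altsum !big_geq // linear0l subrr; ring.
rewrite AsumS GsumS altsumS (vertexS n.+1).
have -> : Asum n = Gsum n + (1 / 2 * (b (z 1) (z 1) - b (z n.+1) (z n.+1))
  + 2 * b (altsum n) (z 1)) by rewrite -IHn subrKC.
rewrite (vertex_altsum n) exprS; move: (mid n.+1) (altsum n) (z 1) => Q T x.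
rewrite /skew_part !(linearDl, linearDr, linearBl, linearBr, linearNl, linearNr,
  linearZl_LR, linearZr_LR).
by field.
Qed.

Lemma Asum_eq_Fsum_closed_odd n : odd n -> z n.+1 = z 1 -> Asum n = Fsum n.
Proof.
move=> odd_n closed; apply/eqP; rewrite -subr_eq0 Asum_sub_Fsum.
have altsum_eq : altsum n = - z 1.
  have z1_eq := vertex_altsum n.
  rewrite closed -signr_odd odd_n expr1 scaleN1r in z1_eq.
  apply: (scalerI two_neq0); rewrite scalerN.
  have -> : 2 *: z 1 = z 1 + z 1 by rewrite scaler_nat mulr2n.
  by rewrite {2}z1_eq opprB [z 1 + _]addrC addrK.
by rewrite altsum_eq /skew_part linearNl linearNr subrr.
Qed.

Lemma Asum_eq_Gsum_link n :
  (forall w, b w (z 1) = 0) -> (forall w, b (z n.+1) w = 0) -> Asum n = Gsum n.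
Proof.
move=> z1_ker zn1_ker; apply/eqP; rewrite -subr_eq0 Asum_sub_Gsum !z1_ker zn1_ker.
by rewrite subrr !mulr0 addr0.
Qed.

End MidpointIdentities.

Section CoordinatePairing.
Variables (R : realType) (d : nat).

Lemma dotC (u v : 'rV[R]_d) : dot u v = dot v u.
Proof. by apply: eq_bigr => k _; rewrite mulrC. Qed.

Lemma dot0r (u : 'rV[R]_d) : dot u 0 = 0.
Proof. by apply: big1 => k _; rewrite mxE mulr0. Qed.

Definition xy_pairing (u v : pt R d) : R := dot u.1 v.2.

Lemma xy_pairing_bilinear : bilinear_for *%R *%R xy_pairing.
Proof.
split=> [v a u u' | u a v v'];
  rewrite /xy_pairing /dot /= mulr_sumr -big_split /=;
  by apply: eq_bigr => k _; rewrite !mxE; ring.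
Qed.

HB.instance Definition _ := bilinear_isBilinear.Build R (pt R d) (pt R d) R
  *%R *%R xy_pairing xy_pairing_bilinear.

Lemma xy_pairingL1 u : L1 u -> forall w, xy_pairing w u = 0.
Proof. by move=> u_L1 w; rewrite /xy_pairing u_L1 dot0r. Qed.

Lemma xy_pairingL2 u : L2 u -> forall w, xy_pairing u w = 0.
Proof. by move=> u_L2 w; rewrite /xy_pairing u_L2 dotC dot0r. Qed.

Lemma omega_skew_part (u v : pt R d) : omega u v = skew_part xy_pairing u v.
Proof. by rewrite /omega /skew_part /xy_pairing [dot u.2 _]dotC. Qed.

Lemma action_Asum n z : action n z = Asum xy_pairing z n.
Proof.
rewrite /action /Asum; congr (_ * _).
by apply: eq_bigr => i _; rewrite omega_skew_part.
Qed.

Lemma Ffun_Fsum n z : Ffun n (Qs z) = Fsum xy_pairing z n.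
Proof.
rewrite /Ffun /Fsum; congr (_ * _); apply: eq_bigr => i _.
by apply: eq_bigr => j _; rewrite omega_skew_part.
Qed.

Lemma Gfun_Gsum n z : Gfun n (Qs z) = Gsum xy_pairing z n.
Proof. by []. Qed.

End CoordinatePairing.

Theorem mainTheorem12 (R : realType) (d : nat)
  (M : pt R d -> Prop) (TM : pt R d -> pt R d -> Prop) :
  (forall (n : nat) (z : nat -> pt R d),
     odd n -> periodic_orbit M TM n z ->
     action n z = Ffun n (Qs z)) /\
  (forall (n : nat) (z : nat -> pt R d),
     link_orbit M TM n z ->
     action n z = Gfun n (Qs z)).
Proof.
have two_neq0 : 2 != 0 :> R by rewrite pnatr_eq0.
split.
- move=> n z odd_n [closed _]; rewrite action_Asum Ffun_Fsum.
  by apply: (Asum_eq_Fsum_closed_odd _ two_neq0).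
- move=> n z [z1_L1 [zn1_L2 _]]; rewrite action_Asum Gfun_Gsum.
  apply: (Asum_eq_Gsum_link two_neq0).
  + exact: xy_pairingL1.
  + exact: xy_pairingL2.
Qed.
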